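(* Let $X$ be an alphabet, $L\subseteq X^*$, and let $I=Y_0^*\{x_1,\varepsilon\}Y_1^*\cdots\{x_n,\varepsilon\}Y_n^*$ with $Y_0,\dots,Y_n\subseteq X$ and $x_1,\dots,x_n\in X$. Let $m\ge N(L)+1$. Then the following are equivalent: (1) $I\subseteq \downarrow L$; (2) for every $m'\ge N(L)+1$, the word $w_{Y_0}^{m'}x_1w_{Y_1}^{m'}\cdots x_nw_{Y_n}^{m'}$ belongs to $\downarrow L$; (3) the word $w_{Y_0}^{m}x_1w_{Y_1}^{m}\cdots x_nw_{Y_n}^{m}$ belongs to $\downarrow L$.
   Context: $u\preceq v$ denotes the subword ordering on $X^*$ and $\downarrow L=\{u\mid\exists v\in L: u\preceq v\}$. An ideal expression is a finite product of factors, each of the form $Y^*$ with $Y\subseteq X$ (possibly empty, $\emptyset^*=\{\varepsilon\}$) or $\{x,\varepsilon\}$ with $x\in X$; the set it denotes is an ideal, and the length of the expression is its number of factors. Every downward closed language is a finite union of ideals. $N(L)$ denotes the least number $N$ such that $\downarrow L$ is a finite union of ideals each given by an expression of length at most $N$. For $Y\subseteq X$, $w_Y$ denotes a fixed word containing every letter of $Y$ exactly once and no other letters ($w_\emptyset=\varepsilon$). *)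

From Stdlib Require List.
From mathcomp Require Import all_boot.
Set Implicit Arguments. Unset Strict Implicit. Unset Printing Implicit Defensive.

Section Words.
Variable X : finType.

(* subword ordering u ≼ v is mathcomp's [subseq u v] (scattered subsequence) *)
Definition downclosure (L : seq X -> Prop) (u : seq X) : Prop :=
  exists v, L v /\ subseq u v.

Inductive factor : Type :=
| FStar : {set X} -> factor
| FOpt : X -> factor.

Definition factor_lang (f : factor) (w : seq X) : Prop :=
  match f with
  | FStar Y => all (fun a => a \in Y) w
  | FOpt x => w = [::] \/ w = [:: x]
  end.

(* an ideal expression is a list of factors; its length is [size e] *)
Fixpoint expr_lang (e : seq factor) (w : seq X) : Prop :=
  match e with
  | [::] => w = [::]
  | f :: e' => exists w1 w2, w = w1 ++ w2 /\ factor_lang f w1 /\ expr_lang e' w2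
  end.

Definition union_of_ideals_bounded (L : seq X -> Prop) (N : nat) : Prop :=
  exists es : seq (seq factor),
    (forall e, List.In e es -> size e <= N) /\
    (forall w, downclosure L w <-> exists e, List.In e es /\ expr_lang e w).

Definition is_NL (L : seq X -> Prop) (N : nat) : Prop :=
  union_of_ideals_bounded L N /\
  (forall N', union_of_ideals_bounded L N' -> N <= N').

Definition letter_words (wY : {set X} -> seq X) : Prop :=
  forall Y, uniq (wY Y) /\ wY Y =i Y.

Definition wpow (m : nat) (w : seq X) : seq X := flatten (nseq m w).

(* I = Y0^* {x1,eps} Y1^* ... {xn,eps} Yn^*, with ps = [(x1,Y1);...;(xn,Yn)] *)
Definition ideal_expr (Y0 : {set X}) (ps : seq (X * {set X})) : seq factor :=
  FStar Y0 :: flatten [seq [:: FOpt p.1; FStar p.2] | p <- ps].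

Definition ideal_word (wY : {set X} -> seq X) (m : nat)
    (Y0 : {set X}) (ps : seq (X * {set X})) : seq X :=
  wpow m (wY Y0) ++ flatten [seq p.1 :: wpow m (wY p.2) | p <- ps].

End Words.

From mathcomp Require Import all_boot.
Set Implicit Arguments. Unset Strict Implicit. Unset Printing Implicit Defensive.

(* In the word w_{Y_0}^m x_1 w_{Y_1}^m ... each star block of I is covered m
   times over by copies of w_Y.  If this word matches an ideal expression J of
   length < m, then by pigeonhole some copy of each w_{Y_i} is matched entirely
   inside one factor Z^* of J; so Y_i is contained in Z and all of Y_i^* can be
   absorbed there, i.e. I is contained in J.  As the down-closure of L is a union
   of ideals of length at most N(L) < m, the word lying in it forces I into it;
   the remaining implications hold because the word itself lies in I. *)

Lemma cat_eq_cat_inv (T : Type) (a b c d : seq T) : a ++ b = c ++ d ->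
  exists r, (a = c ++ r /\ d = r ++ b) \/ (c = a ++ r /\ b = r ++ d).
Proof.
elim: a c => [|x a IH] [|y c] /=.
- by move=> ->; exists [::]; left.
- by move=> ->; exists (y :: c); right.
- by move=> <-; exists (x :: a); left.
- by case=> -> /IH [r [[-> ->]|[-> ->]]]; exists r; [left|right].
Qed.

Section IdealInclusion.
Variable X : finType.
Implicit Types (Y Z : {set X}) (x z : X) (f g : factor X) (e : seq (factor X)).
Implicit Types (u v w : seq X) (c : nat) (ss : seq (factor X * seq X)).
Implicit Types (ps : seq (X * {set X})).

Definition expr_incl e1 e2 := forall u, expr_lang e1 u -> expr_lang e2 u.

Lemma expr_lang_consr f e w : expr_lang e w -> expr_lang (f :: e) w.
Proof. by move=> Hw; exists [::], w; split=> //; split=> //; case: f => //= x; left. Qed.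

Lemma expr_incl_consr f e1 e2 : expr_incl e1 e2 -> expr_incl e1 (f :: e2).
Proof. by move=> H u /H; apply: expr_lang_consr. Qed.

Lemma expr_incl_cons f e1 e2 : expr_incl e1 e2 -> expr_incl (f :: e1) (f :: e2).
Proof.
by move=> H u [u1 [u2 [-> [Hu1 /H Hu2]]]]; exists u1, u2.
Qed.

Lemma expr_incl_cons_star g Z e1 e2 :
    (forall w, factor_lang g w -> {subset w <= Z}) ->
    expr_incl e1 (FStar Z :: e2) -> expr_incl (g :: e1) (FStar Z :: e2).
Proof.
move=> HgZ H u [u1 [u2 [-> [/HgZ /allP Hu1 /H [w1 [w2 [-> [Hw1 Hw2]]]]]]]].
by exists (u1 ++ w1), w2; rewrite catA /= all_cat Hu1.
Qed.

Lemma expr_incl_set0_star e1 e2 :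
  expr_incl e1 e2 -> expr_incl (FStar set0 :: e1) e2.
Proof.
move=> H u [[|a u1] [u2 [-> [/= Hu1 /H Hu2]]]] //.
by move: Hu1; rewrite inE.
Qed.

Lemma expr_lang_suffix e s t : expr_lang e (s ++ t) -> expr_lang e t.
Proof.
elim: e s t => [|f e IH] s t /=; first by case: s.
move=> [w1 [w2 [E [H1 H2]]]].
have [r [[E1 E2]|[E1 E2]]] := cat_eq_cat_inv E.
  by apply: expr_lang_consr; apply: (IH r); rewrite -E2.
exists r, w2; split=> //; split=> //; subst w1.
case: f H1 => /= [Y|x]; first by rewrite all_cat => /andP [].
case: s {E E2} => [|a s] // [//|[_]].
by case: s => [|? ?] //; case: r => [|? ?] //; left.
Qed.

Fixpoint ncover Y c v : Prop :=
  match c with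
  | 0 => True
  | c'.+1 => exists v1 v2, v = v1 ++ v2 /\ {subset Y <= v1} /\ ncover Y c' v2
  end.

Lemma subset_nil_set0 Y : {subset Y <= [::] : seq X} -> Y = set0.
Proof. by move=> HY; apply/setP => y; rewrite inE; apply/negbTE/negP => /HY. Qed.

Lemma ncover_catl Y c s v : ncover Y c v -> ncover Y c (s ++ v).
Proof.
case: c => //= c [v1 [v2 [-> [H1 H2]]]]; exists (s ++ v1), v2.
by rewrite catA; split=> //; split=> // y Hy; rewrite mem_cat H1 ?orbT.
Qed.

Lemma ncover_leq Y c c' v : c' <= c -> ncover Y c v -> ncover Y c' v.
Proof.
elim: c c' v => [|c IH] [|c'] v //= Hle [v1 [v2 [-> [H1 H2]]]].
by exists v1, v2; split=> //; split=> //; apply: IH Hle H2.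
Qed.

Lemma ncover_set0 c v : ncover set0 c v.
Proof.
elim: c v => //= c IH v; exists [::], v.
by split=> //; split=> // y; rewrite inE.
Qed.

Lemma ncover_subset Y c v : ncover Y c.+1 v -> {subset Y <= v}.
Proof. by move=> /= [v1 [v2 [-> [H1 _]]]] y Hy; rewrite mem_cat H1. Qed.

Lemma ncover_nil Y c : ncover Y c.+1 [::] -> Y = set0.
Proof. by move/ncover_subset/subset_nil_set0. Qed.

Lemma ncover_cat Y c w v :
  ncover Y c.+1 (w ++ v) -> {subset Y <= w} \/ ncover Y c v.
Proof.
move=> /= [v1 [v2 [E [H1 H2]]]].
have [r [[-> _]|[_ ->]]] := cat_eq_cat_inv E.
  by left=> y Hy; rewrite mem_cat H1.
by right; apply: ncover_catl.
Qed.

Lemma ncover_behead Y c a v : ncover Y c.+1 (a :: v) -> ncover Y c v.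
Proof.
move=> /= [[|b v1] [v2 [E [H1 H2]]]].
  by rewrite (subset_nil_set0 H1); apply: ncover_set0.
by case: E => _ ->; apply: ncover_catl.
Qed.

Definition thick_factor c f v : Prop :=
  match f with
  | FStar Y => all (fun a => a \in Y) v /\ ncover Y c v
  | FOpt x => v = [:: x]
  end.

Fixpoint thick c ss : Prop :=
  if ss is p :: ss' then thick_factor c p.1 p.2 /\ thick c ss' else True.

Definition sample_expr ss := map fst ss.

Definition sample_word ss := flatten (map snd ss).

Lemma sample_word_cons p ss : sample_word (p :: ss) = p.2 ++ sample_word ss.
Proof. by []. Qed.

Lemma thick_leq c c' ss : c' <= c -> thick c ss -> thick c' ss.
Proof.
move=> Hle; elim: ss => //= [[[Y|x] v] ss IH] [Hf /IH Hss]; split=> //.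
by case: Hf => H1 /(ncover_leq Hle).
Qed.

Lemma thick_sample_lang c ss :
  thick c ss -> expr_lang (sample_expr ss) (sample_word ss).
Proof.
elim: ss => //= [[f v] ss IH] [Hf /IH Hss]; exists v, (sample_word ss).
by split=> //; split=> //; case: f Hf => /= [Y [] | x ->] //=; right.
Qed.

Lemma thick_incl_nil c ss :
  thick c.+1 ss -> sample_word ss = [::] -> expr_incl (sample_expr ss) [::].
Proof.
elim: ss => [|[g [|a v]] ss IH] //=; first by move=> _ _ u.
move=> [Hg /IH Hss] /= /Hss {}Hss; case: g Hg => // Y [_ /ncover_nil ->].
exact: expr_incl_set0_star.
Qed.

Section ThickInclStep.
Variable e : seq (factor X).
Hypothesis thick_incl_e : forall c ss, size e < c -> thick c ss ->
  expr_lang e (sample_word ss) -> expr_incl (sample_expr ss) e.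

Lemma thick_incl_star Z c ss : size e < c -> thick c.+1 ss ->
    expr_lang (FStar Z :: e) (sample_word ss) ->
  expr_incl (sample_expr ss) (FStar Z :: e).
Proof.
move=> He; have He1 : size e < c.+1 by apply: ltnW.
elim: ss => [|[g v] ss IHs] /=; first by move=> _ Hw u ->.
move=> [Hg Hss] Hw; have [w1 [w2 [E [Hw1 Hw2]]]] := Hw; clear Hw.
have incl_tail r : sample_word ss = r ++ w2 -> all (fun a => a \in Z) r ->
    expr_incl (sample_expr ss) (FStar Z :: e).
  by move=> Eps Hr; apply: IHs => //; exists r, w2; rewrite Eps.
have opt_star x : x \in Z -> forall w, factor_lang (FOpt x) w -> {subset w <= Z}.
  by move=> Hx w [|] -> // y; rewrite inE => /eqP ->.
rewrite sample_word_cons /= in E.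
have [r [[Ev Ew2]|[Ew1 Eps]]] := cat_eq_cat_inv E; clear E.
all: case: g Hg => [Y [HvY HvR]|x /= Hv]; try subst v.
- have [HY|Hr] := ncover_cat HvR.
    apply: expr_incl_cons_star; first by move=> w /allP Hw y /Hw /HY /(allP Hw1).
    by apply: IHs => //; apply/expr_lang_consr/(expr_lang_suffix (s := r)); rewrite -Ew2.
  apply/expr_incl_consr/(thick_incl_e (ss := (FStar Y, r) :: ss) He) => /=.
    split; last exact: thick_leq Hss.
    by split=> //; move: HvY; rewrite all_cat => /andP [].
  by rewrite sample_word_cons -Ew2.
- case: w1 Hv Hw1 => [|b w1] /= Hv Hw1.
    apply/expr_incl_consr/(thick_incl_e (ss := (FOpt x, [:: x]) :: ss) He1) => //.
    by rewrite sample_word_cons -Hv -Ew2.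
  case: Hv => <- /nilP; rewrite cat_nilp => /andP [_ /nilP Er].
  case/andP: Hw1 => Hx _; apply: expr_incl_cons_star (opt_star _ Hx) _.
  by apply: IHs => //; apply: expr_lang_consr; move: Hw2; rewrite Ew2 Er.
- apply: expr_incl_cons_star; last first.
    by apply: (incl_tail r) => //; move: Hw1; rewrite Ew1 all_cat => /andP [].
  move=> w /allP Hw y /Hw /(ncover_subset HvR) Hy.
  by apply: (allP Hw1); rewrite Ew1 mem_cat Hy.
- rewrite Ew1 /= in Hw1; case/andP: Hw1 => Hx Hr.
  exact: expr_incl_cons_star (opt_star _ Hx) (incl_tail r Eps Hr).
Qed.

Lemma thick_incl_opt z c ss : size e < c -> thick c.+1 ss ->
    expr_lang (FOpt z :: e) (sample_word ss) ->
  expr_incl (sample_expr ss) (FOpt z :: e).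
Proof.
move=> He; have He1 : size e < c.+1 by apply: ltnW.
elim: ss => [|[g v] ss IHs] /=; first by move=> _ Hw u ->.
move=> [Hg Hss] Hw; have [w1 [w2 [E [Hw1 Hw2]]]] := Hw; clear Hw.
case: Hw1 => Ew1; subst w1.
  apply/expr_incl_consr/(thick_incl_e (ss := (g, v) :: ss) He1) => //.
  by rewrite E.
rewrite sample_word_cons /= in E.
case: g Hg => [Y [HvY HvR]|x /= Hv]; last first.
  by subst v; case: E => -> E; apply/expr_incl_cons/(thick_incl_e He1 Hss); rewrite E.
case: v E HvY HvR => [|a v] /= E HvY HvR.
  rewrite (ncover_nil HvR); apply/expr_incl_set0_star/IHs => //.
  by exists [:: z], w2; rewrite E; split=> //; split=> //; right.
case: E => _ E; apply/expr_incl_consr/(thick_incl_e (ss := (FStar Y, v) :: ss) He).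
- split; last exact: thick_leq Hss.
  by split; [case/andP: HvY | apply: ncover_behead HvR].
- by rewrite sample_word_cons E.
Qed.

End ThickInclStep.

Theorem thick_incl e c ss : size e < c -> thick c ss ->
  expr_lang e (sample_word ss) -> expr_incl (sample_expr ss) e.
Proof.
elim: e c ss => [|f e IHe] [|c] ss //= Hc Hss Hw; first exact: thick_incl_nil Hss Hw.
by case: f Hw => [Z|z] Hw; [apply: thick_incl_star Hss Hw | apply: thick_incl_opt Hss Hw].
Qed.

Definition ideal_sample (wY : {set X} -> seq X) m Y0 (ps : seq (X * {set X})) :=
  (FStar Y0, wpow m (wY Y0)) ::
  flatten [seq [:: (FOpt p.1, [:: p.1]); (FStar p.2, wpow m (wY p.2))] | p <- ps].

Lemma ideal_sample_expr wY m Y0 ps :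
  sample_expr (ideal_sample wY m Y0 ps) = ideal_expr Y0 ps.
Proof. by rewrite /ideal_expr /=; congr cons; elim: ps => //= p ps ->. Qed.

Lemma ideal_sample_word wY m Y0 ps :
  sample_word (ideal_sample wY m Y0 ps) = ideal_word wY m Y0 ps.
Proof. by rewrite /ideal_word /sample_word /=; congr cat; elim: ps => //= p ps ->. Qed.

Lemma thick_wpow wY Y m : letter_words wY ->
  thick_factor m (FStar Y) (wpow m (wY Y)).
Proof.
move=> hw; have memY y : (y \in wY Y) = (y \in Y) by apply: (hw Y).2.
split; rewrite /wpow.
  by elim: m => //= m IH; rewrite all_cat IH andbT; apply/allP => y; rewrite memY.
elim: m => //= m IH; exists (wY Y), (flatten (nseq m (wY Y))).
by split=> //; split=> // y; rewrite memY.
Qed.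

Lemma thick_ideal_sample wY m Y0 ps : letter_words wY ->
  thick m (ideal_sample wY m Y0 ps).
Proof.
move=> hw; split; first exact: thick_wpow.
by elim: ps => //= p ps IH; do 2!split=> //; apply: thick_wpow.
Qed.

Lemma ideal_word_in_ideal wY m Y0 ps : letter_words wY ->
  expr_lang (ideal_expr Y0 ps) (ideal_word wY m Y0 ps).
Proof.
move=> hw; rewrite -(ideal_sample_expr wY m) -ideal_sample_word.
exact: thick_sample_lang (thick_ideal_sample m Y0 ps hw).
Qed.

Lemma ideal_incl_of_word wY m Y0 ps e : letter_words wY -> size e < m ->
    expr_lang e (ideal_word wY m Y0 ps) -> expr_incl (ideal_expr Y0 ps) e.
Proof.
move=> hw He; rewrite -(ideal_sample_expr wY m) -ideal_sample_word.
exact: thick_incl (thick_ideal_sample m Y0 ps hw).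
Qed.

Lemma ideal_incl_downclosure_of_word (L : seq X -> Prop) N wY m Y0 ps :
    letter_words wY -> union_of_ideals_bounded L N -> N < m ->
    downclosure L (ideal_word wY m Y0 ps) ->
  forall u, expr_lang (ideal_expr Y0 ps) u -> downclosure L u.
Proof.
move=> hw [es [Hsize HL]] HNm /HL [e [He Hw]] u Hu.
apply/HL; exists e; split=> //.
exact: ideal_incl_of_word hw (leq_ltn_trans (Hsize e He) HNm) Hw u Hu.
Qed.

End IdealInclusion.

Theorem mainTheorem2 (X : finType) (L : seq X -> Prop)
    (wY : {set X} -> seq X) (hw : letter_words wY)
    (Y0 : {set X}) (ps : seq (X * {set X})) (NL : nat) (hN : is_NL L NL)
    (m : nat) (hm : NL + 1 <= m) :
  [/\ ((forall u, expr_lang (ideal_expr Y0 ps) u -> downclosure L u) <->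
       (forall m', NL + 1 <= m' -> downclosure L (ideal_word wY m' Y0 ps))),
      ((forall m', NL + 1 <= m' -> downclosure L (ideal_word wY m' Y0 ps)) <->
       downclosure L (ideal_word wY m Y0 ps)) &
      ((forall u, expr_lang (ideal_expr Y0 ps) u -> downclosure L u) <->
       downclosure L (ideal_word wY m Y0 ps))].
Proof.
have from_word m' : NL + 1 <= m' -> downclosure L (ideal_word wY m' Y0 ps) ->
    forall u, expr_lang (ideal_expr Y0 ps) u -> downclosure L u.
  by rewrite addn1; apply: ideal_incl_downclosure_of_word hw hN.1.
have to_word m' := ideal_word_in_ideal m' Y0 ps hw.
split; split.
- by move=> HI m' _; apply/HI/to_word.
- by move=> Hw; apply: from_word hm (Hw m hm).
- by move=> Hw; apply: Hw hm.
- by move=> Hw m' _; apply/(from_word _ hm Hw)/to_word.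
- by move=> HI; apply/HI/to_word.
- exact: from_word hm.
Qed.
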